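(* Let $G$ be a graph of girth at least $5$ (every cycle of $G$, if any, has length at least $5$), and let $H$ be a maximal co-interval subgraph of $G$ with at least one edge. Then there is an edge $uv\in E(G)$ such that $E(H)=\delta_G(u)\cup\delta_G(v)$, i.e. $H$ is the $(u,v)$-ant of $G$.
   Context: All graphs are finite and simple. $\delta_G(x)$ is the set of edges of $G$ incident to $x$ and $N_G[x]$ the closed neighbourhood. For an edge $uv$, the $(u,v)$-ant of $G$ is the subgraph $(N_G[u]\cup N_G[v],\ \delta_G(u)\cup\delta_G(v))$. A graph is co-interval if its vertices can be assigned closed real intervals such that two distinct vertices are adjacent iff their intervals are disjoint. A co-interval subgraph $H$ of $G$ is maximal if no co-interval subgraph $H'$ of $G$ satisfies $E(H)\subsetneq E(H')$. *)

From mathcomp Require Import all_boot.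
From Stdlib Require Import Reals.
Set Implicit Arguments. Unset Strict Implicit. Unset Printing Implicit Defensive.

(* A finite simple graph is a symmetric irreflexive relation g on a finType T.
   Edges are represented as 2-element vertex sets {x, y}. *)

Definition edges (T : finType) (g : rel T) : {set {set T}} :=
  [set e : {set T} | [exists x : T, exists y : T, g x y && (e == [set x; y])]].

Definition delta (T : finType) (g : rel T) (x : T) : {set {set T}} :=
  [set e in edges g | x \in e].

Definition girth_ge5 (T : finType) (g : rel T) : Prop :=
  forall s : seq T, uniq s -> 3 <= size s -> cycle g s -> 5 <= size s.

Definition is_subgraph (T : finType) (g : rel T) (V : {set T}) (E : {set {set T}}) : Prop :=
  E \subset edges g /\ (forall e, e \in E -> e \subset V).

(* closed real interval [l i, r i] (nonempty: l i <= r i); two distinct vertices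
   are adjacent iff their intervals are disjoint *)
Definition cointerval (T : finType) (V : {set T}) (E : {set {set T}}) : Prop :=
  exists (l r : T -> R),
    (forall x, x \in V -> Rle (l x) (r x)) /\
    (forall x y, x \in V -> y \in V -> x != y ->
       ([set x; y] \in E <-> (Rlt (r x) (l y) \/ Rlt (r y) (l x)))).

Definition cointerval_subgraph (T : finType) (g : rel T) (V : {set T}) (E : {set {set T}}) : Prop :=
  is_subgraph g V E /\ cointerval V E.

Definition maximal_cointerval_subgraph (T : finType) (g : rel T) (V : {set T}) (E : {set {set T}}) : Prop :=
  cointerval_subgraph g V E /\
  ~ (exists (V' : {set T}) (E' : {set {set T}}), cointerval_subgraph g V' E' /\ E \proper E').

(* Let l, r be an interval representation of H and pick u with the leftmost
   right end and v with the rightmost left end. Since H has an edge, the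
   intervals of u and v are disjoint, so uv is an edge. If an edge xy of H,
   with the interval of x left of that of y, avoided both u and v, then
   u y x v would be a 4-cycle; hence E(H) lies in the (u,v)-ant. Conversely,
   as G has no triangle, the (u,v)-ant is co-interval: give u, v, the other
   neighbours of u and the other neighbours of v the intervals [0,1], [3,4],
   [2,4] and [0,2]. Maximality of H forces equality. *)

From mathcomp Require Import all_boot.
From Stdlib Require Import Reals Lra.

Set Implicit Arguments. Unset Strict Implicit. Unset Printing Implicit Defensive.

Definition closed_nbhd (T : finType) (g : rel T) (x : T) : {set T} :=
  [set y | (y == x) || g x y].

Lemma exists_Rmin (T : eqType) (f : T -> R) (s : seq T) : s != [::] ->
  exists2 x, x \in s & forall y, y \in s -> Rle (f x) (f y).
Proof.
elim: s => // a [|b s] IH _.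
  by exists a => [|y]; rewrite ?mem_seq1 // => /eqP ->; apply: Rle_refl.
have [m ms m_min] := IH isT.
have [fam | fma] := Rle_lt_dec (f a) (f m).
  exists a => [|y]; first exact: mem_head.
  rewrite in_cons => /predU1P [-> | ys]; first exact: Rle_refl.
  exact: Rle_trans fam (m_min y ys).
exists m => [|y]; first by rewrite in_cons ms orbT.
rewrite in_cons => /predU1P [-> | ys]; [lra | exact: m_min].
Qed.

Lemma exists_Rmin_set (T : finType) (f : T -> R) (A : {set T}) : A != set0 ->
  exists2 x, x \in A & forall y, y \in A -> Rle (f x) (f y).
Proof.
case/set0Pn=> a aA.
have [|x xA x_min] := @exists_Rmin _ f (enum A).
  by apply/eqP=> eA; have := mem_enum A a; rewrite eA aA.
by exists x => [|y yA]; [rewrite -mem_enum | apply: x_min; rewrite mem_enum].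
Qed.

Section Graph.
Variables (T : finType) (g : rel T).
Hypotheses (gsym : symmetric g) (girr : irreflexive g).

Lemma adj_neq x y : g x y -> x != y.
Proof. by apply: contraTneq => ->; rewrite girr. Qed.

Lemma mem_edges2 x y : x != y -> ([set x; y] \in edges g) = g x y.
Proof.
move=> xy; rewrite inE; apply/existsP/idP => [[x' /existsP [y' /andP [gxy' /eqP e]]] | gxy].
  move: xy (set21 x y) (set22 x y); rewrite e !inE.
  move=> xy /orP[]/eqP ex /orP[]/eqP ey; subst;
    first [by rewrite eqxx in xy | by rewrite gsym | done].
by exists x; apply/existsP; exists y; rewrite gxy eqxx.
Qed.

Lemma edgesP e : e \in edges g -> exists x y, g x y /\ e = [set x; y].
Proof. by rewrite inE => /existsP [x /existsP [y /andP [gxy /eqP ->]]]; exists x, y. Qed.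

Lemma mem_delta e x : (e \in delta g x) = (e \in edges g) && (x \in e).
Proof. by rewrite inE. Qed.

Lemma mem_delta2 u x y : x != y ->
  ([set x; y] \in delta g u) = ((x == u) && g u y) || ((y == u) && g u x).
Proof.
move=> xy; rewrite mem_delta mem_edges2 // !inE.
rewrite ![u == _]eq_sym; move: xy.
by case: (eqVneq x u) => [->|_]; case: (eqVneq y u) => [->|_];
  rewrite ?eqxx ?andbT ?andbF ?orbF //= gsym.
Qed.

Lemma delta_sub_closed_nbhd x e : e \in delta g x -> e \subset closed_nbhd g x.
Proof.
rewrite mem_delta => /andP [/edgesP [a [b [gab ->]]]]; rewrite !inE => xab.
apply/subsetP=> w; rewrite !inE.
by case/orP: xab => /eqP -> /orP [] /eqP ->; rewrite ?eqxx // ?gab ?orbT // gsym gab orbT.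
Qed.

Definition ant_vertices u v : {set T} := closed_nbhd g u :|: closed_nbhd g v.
Definition ant_edges u v : {set {set T}} := delta g u :|: delta g v.

Hypothesis hgirth : girth_ge5 g.

Lemma girth5_no_triangle x y z : g x y -> g y z -> g z x -> False.
Proof.
move=> gxy gyz gzx; suff: 5 <= size [:: x; y; z] by [].
apply: hgirth => //; last by rewrite /= gxy gyz gzx.
by rewrite /= !inE negb_or adj_neq // (eq_sym x z) adj_neq // adj_neq.
Qed.

Lemma girth5_no_C4 w x y z : uniq [:: w; x; y; z] ->
  g w x -> g x y -> g y z -> g z w -> False.
Proof.
move=> uniq_wxyz gwx gxy gyz gzw; suff: 5 <= size [:: w; x; y; z] by [].
by apply: hgirth; rewrite //= gwx gxy gyz gzw.
Qed.

Section IntervalModel.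
Variables (V : {set T}) (E : {set {set T}}) (l r : T -> R).
Hypotheses (E_edges : E \subset edges g) (E_in_V : forall e, e \in E -> e \subset V).
Hypothesis lr : forall x, x \in V -> Rle (l x) (r x).
Hypothesis E_disjoint : forall x y, x \in V -> y \in V -> x != y ->
  ([set x; y] \in E <-> (Rlt (r x) (l y) \/ Rlt (r y) (l x))).

Lemma neq_of_disjoint x y : x \in V -> Rlt (r x) (l y) -> x != y.
Proof. by move=> xV rxly; apply/eqP=> exy; have := lr xV; rewrite exy in rxly *; lra. Qed.

Lemma adj_of_disjoint x y : x \in V -> y \in V -> Rlt (r x) (l y) -> g x y.
Proof.
move=> xV yV rxly; rewrite -mem_edges2 ?(neq_of_disjoint xV rxly) //.
by apply: (subsetP E_edges); apply/E_disjoint; rewrite ?(neq_of_disjoint xV rxly); auto.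
Qed.

Lemma orient_edge e : e \in E ->
  exists x y, [/\ x \in V, y \in V, Rlt (r x) (l y) & e = [set x; y]].
Proof.
move=> eE; have [x [y [gxy ee]]] := edgesP (subsetP E_edges e eE).
have xV : x \in V by apply: (subsetP (E_in_V eE)); rewrite ee set21.
have yV : y \in V by apply: (subsetP (E_in_V eE)); rewrite ee set22.
have [rxly | rylx] : Rlt (r x) (l y) \/ Rlt (r y) (l x).
  by apply/(E_disjoint xV yV (adj_neq gxy)); rewrite -ee.
  by exists x, y.
by exists y, x; rewrite setUC.
Qed.

Variables u v : T.
Hypotheses (uV : u \in V) (vV : v \in V).
Hypothesis u_leftmost : forall x, x \in V -> Rle (r u) (r x).
Hypothesis v_rightmost : forall x, x \in V -> Rle (l x) (l v).

Lemma leftmost_rightmost_disjoint : E != set0 -> Rlt (r u) (l v).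
Proof.
case/set0Pn=> e /orient_edge [x [y [xV yV rxly _]]].
by have := u_leftmost xV; have := v_rightmost yV; lra.
Qed.

Lemma E_sub_ant : E \subset ant_edges u v.
Proof.
apply/subsetP=> e eE; have [x [y [xV yV rxly ee]]] := orient_edge eE.
have ant_uv : (x == u) || (y == v).
  apply/contraT; rewrite negb_or => /andP [xu yv].
  have rux := u_leftmost xV; have lyv := v_rightmost yV.
  have uy : u != y by apply: neq_of_disjoint => //; lra.
  have uv : u != v by apply: neq_of_disjoint => //; lra.
  have xv : x != v by apply: neq_of_disjoint => //; lra.
  have yx : y != x by rewrite eq_sym; apply: neq_of_disjoint.
  exfalso; apply: (@girth5_no_C4 u y x v).
  - by rewrite /= !inE !negb_or (eq_sym u x) xu yv uy uv yx xv.
  - by apply: adj_of_disjoint => //; lra.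
  - by rewrite gsym; apply: adj_of_disjoint.
  - by apply: adj_of_disjoint => //; lra.
  - by rewrite gsym; apply: adj_of_disjoint => //; lra.
rewrite /ant_edges in_setU !mem_delta (subsetP E_edges e eE) ee !inE.
by case/orP: ant_uv => /eqP ->; rewrite eqxx ?orbT.
Qed.

End IntervalModel.

Lemma cointerval_subgraph_sub_ant V E : cointerval_subgraph g V E -> E != set0 ->
  exists u v, g u v /\ E \subset ant_edges u v.
Proof.
move=> [[E_edges E_in_V] [l [r [lr E_disjoint]]]] E_ne0.
have V_ne0 : V != set0.
  have /set0Pn [e eE] := E_ne0.
  have [x [_ [xV _ _ _]]] := orient_edge E_edges E_in_V E_disjoint eE.
  by apply/set0Pn; exists x.
have [u uV u_min] := exists_Rmin_set r V_ne0.
have [v vV v_max] := exists_Rmin_set (fun x => Ropp (l x)) V_ne0.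
have {}v_max x : x \in V -> Rle (l x) (l v) by move/v_max; lra.
exists u, v; split; last exact: (E_sub_ant E_edges E_in_V lr E_disjoint uV vV u_min v_max).
apply: (adj_of_disjoint E_edges lr E_disjoint uV vV).
exact: (leftmost_rightmost_disjoint E_edges E_in_V E_disjoint u_min v_max E_ne0).
Qed.

Section Ant.
Variables (u v : T).
Hypothesis guv : g u v.

Variant ant_vertex_spec (w : T) : bool -> bool -> bool -> bool -> Prop :=
  | AntU : ant_vertex_spec w true false false true
  | AntV : ant_vertex_spec w false true true false
  | AntNu : ant_vertex_spec w false false true false
  | AntNv : ant_vertex_spec w false false false true.

Lemma ant_vertexP w : w \in ant_vertices u v ->
  ant_vertex_spec w (w == u) (w == v) (g u w) (g v w).
Proof.
have vu : v != u by rewrite eq_sym adj_neq.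
rewrite !inE; have [-> _ | _] := eqVneq w u.
  by rewrite eq_sym (negbTE vu) girr gsym guv; constructor.
have [-> _ | _] := eqVneq w v; first by rewrite guv girr; constructor.
case guw: (g u w); case gvw: (g v w) => //= _; try by constructor.
by case: (girth5_no_triangle guv gvw); rewrite gsym.
Qed.

Definition ant_l (w : T) : R :=
  if w == u then 0%R else if w == v then 3%R else if g u w then 2%R else 0%R.
Definition ant_r (w : T) : R :=
  if w == u then 1%R else if w == v then 4%R else if g u w then 4%R else 2%R.

Lemma ant_cointerval_subgraph :
  cointerval_subgraph g (ant_vertices u v) (ant_edges u v).
Proof.
split; first split.
- by apply/subsetP=> e; rewrite /ant_edges in_setU !mem_delta => /orP [] /andP [].
- move=> e; rewrite /ant_edges in_setU => /orP [] /delta_sub_closed_nbhd sub;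
    apply: subset_trans sub _; [exact: subsetUl | exact: subsetUr].
exists ant_l, ant_r; split=> [w _ | x y xV yV xy].
  by rewrite /ant_l /ant_r; repeat case: ifP => _; lra.
rewrite /ant_edges in_setU !mem_delta2 // /ant_l /ant_r.
by case: (ant_vertexP xV); case: (ant_vertexP yV) => /=; split=> ? //; lra.
Qed.

End Ant.

End Graph.

Theorem mainTheorem13 (T : finType) (g : rel T)
  (gsym : symmetric g) (girr : irreflexive g) (hgirth : girth_ge5 g)
  (VH : {set T}) (EH : {set {set T}})
  (hmax : maximal_cointerval_subgraph g VH EH) (hne : EH != set0) :
  exists u v : T, g u v /\ EH = delta g u :|: delta g v.
Proof.
case: hmax => [hH not_proper].
have [u [v [guv EH_ant]]] := cointerval_subgraph_sub_ant gsym girr hgirth hH hne.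
exists u, v; split=> //; apply/eqP; rewrite eqEproper EH_ant /=.
apply/negP=> EH_proper; apply: not_proper.
exists (ant_vertices g u v), (ant_edges g u v).
by split=> //; exact: ant_cointerval_subgraph.
Qed.
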